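(* For $n\ge 3$, the path $P_n$ with $n$ vertices satisfies $\nu_*(P_n)\le 4n-5$.
   Context: For a finite simple graph $G=(V,E)$ with $\ell=|V|+|E|$, a construction sequence (c-sequence) is a bijection $x:\{1,\dots,\ell\}\to V\sqcup E$ such that every edge $e=uw$ satisfies $x^{-1}(e)>\max\{x^{-1}(u),x^{-1}(w)\}$. The cost of $x$ is $\nu(x)=\sum_{e=uw\in E}\big(2x^{-1}(e)-x^{-1}(u)-x^{-1}(w)\big)$, and $\nu_*(G)$ is the minimum of $\nu(x)$ over all c-sequences for $G$. $P_n$ is the path with vertex set $\{1,\dots,n\}$ and edges $\{j,j+1\}$, $1\le j\le n-1$. *)

From mathcomp Require Import all_boot.
Set Implicit Arguments. Unset Strict Implicit. Unset Printing Implicit Defensive.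

(* A finite simple graph is given by a vertex finType T and an adjacency
   relation g (symmetric, irreflexive).  Edges are the 2-element vertex sets
   {u,w} with g u w. *)
Definition is_edge (T : finType) (g : rel T) (e : {set T}) : bool :=
  [exists u, exists w, g u w && (e == [set u; w])].

Definition edge_t (T : finType) (g : rel T) := {e : {set T} | is_edge g e}.

Definition item_t (T : finType) (g : rel T) := (T + edge_t g)%type.

Definition ell (T : finType) (g : rel T) : nat := #|{: item_t g}|.

(* A c-sequence x : {1..ell} -> V ⊔ E is represented by its inverse
   bijection pos = x^{-1} : V ⊔ E -> {1..ell}; pos takes values in
   'I_(ell.+1) and must be injective with no value 0 (hence a bijection
   onto {1,...,ell}). *)
Definition is_cseq (T : finType) (g : rel T)
    (pos : {ffun item_t g -> 'I_(ell g).+1}) : bool :=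
  [&& injectiveb pos, [forall i, 0 < pos i] &
      [forall e : edge_t g, forall u in val e, pos (inl u) < pos (inr e)]].

Definition cost (T : finType) (g : rel T)
    (pos : {ffun item_t g -> 'I_(ell g).+1}) : nat :=
  \sum_(e : edge_t g) (2 * pos (inr e) - \sum_(u in val e) pos (inl u)).

Definition cost_attained (T : finType) (g : rel T) (k : nat) : bool :=
  [exists pos : {ffun item_t g -> 'I_(ell g).+1}, is_cseq pos && (cost pos == k)].

Lemma cseq_exists (T : finType) (g : rel T) : exists k, cost_attained g k.
Proof.
pose f (i : item_t g) : nat :=
  match i with inl v => (enum_rank v).+1 | inr e => #|T| + (enum_rank e).+1 end.
have hl : ell g = #|T| + #|{: edge_t g}| by rewrite /ell card_sum.
have fb i : f i < (ell g).+1.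
  case: i => [v|e] /=; rewrite hl ltnS.
    by apply: leq_trans (ltn_ord (enum_rank v)) (leq_addr _ _).
  by rewrite leq_add2l; apply: (ltn_ord (enum_rank e)).
pose pos := [ffun i => Ordinal (fb i)].
exists (cost pos); apply/existsP; exists pos; rewrite eqxx andbT.
apply/and3P; split.
- apply/injectiveP => [[v|e] [v'|e']] /=; rewrite !ffunE => /(congr1 val) /= H.
  + by move: H => [/ord_inj/enum_rank_inj ->].
  + by exfalso; move: (ltn_ord (enum_rank v)); rewrite H -addSnnS ltnNge leq_addr.
  + by exfalso; move: (ltn_ord (enum_rank v')); rewrite -H -addSnnS ltnNge leq_addr.
  + by move/eqP: H; rewrite eqn_add2l eqSS => /eqP/ord_inj/enum_rank_inj ->.
- by apply/forallP => -[v|e]; rewrite ffunE //= addnS.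
- apply/forallP => e; apply/forall_inP => u _; rewrite !ffunE /=.
  rewrite addnS ltnS; exact: leq_trans (ltn_ord (enum_rank u)) (leq_addr _ _).
Qed.

Definition nu_star (T : finType) (g : rel T) : nat := ex_minn (cseq_exists g).

Definition path_rel (n : nat) : rel 'I_n :=
  fun i j => (i.+1 == j :> nat) || (j.+1 == i :> nat).
Arguments path_rel n : clear implicits.

(* Build the vertices and edges of P_n in the order v0 v1 e0 v2 e1 v3 e2 ...,
   i.e. vertex 0 at position 1, vertex k >= 1 at position 2k and the edge
   {i, i+1} at position 2i+3, right after its larger endpoint.  The edge
   {0, 1} then costs 2*3 - 1 - 2 = 3 and every other edge costs
   2(2i+3) - 2i - 2(i+1) = 4, for a total of 3 + 4(n-2) = 4n - 5. *)
From mathcomp Require Import all_boot.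
From mathcomp Require Import zify.

Set Implicit Arguments.
Unset Strict Implicit.
Unset Printing Implicit Defensive.

Section CSeqFromPositions.
Variables (T : finType) (g : rel T).

Lemma nu_star_le_cost (pos : {ffun item_t g -> 'I_(ell g).+1}) :
  is_cseq pos -> nu_star g <= cost pos.
Proof.
move=> cseq_pos; rewrite /nu_star; case: ex_minnP => k _; apply.
by apply/existsP; exists pos; rewrite cseq_pos eqxx.
Qed.

Lemma nu_star_le_nat_cost (p : item_t g -> nat) :
  injective p -> (forall x, 0 < p x <= ell g) ->
  (forall (e : edge_t g) u, u \in val e -> p (inl u) < p (inr e)) ->
  nu_star g <= \sum_(e : edge_t g) (2 * p (inr e) - \sum_(u in val e) p (inl u)).
Proof.
move=> p_inj p_range p_edge.
have p_ord x : p x < (ell g).+1 by rewrite ltnS; case/andP: (p_range x).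
pose pos : {ffun item_t g -> 'I_(ell g).+1} := [ffun x => Ordinal (p_ord x)].
have posE x : pos x = p x :> nat by rewrite ffunE.
have cseq_pos : is_cseq pos.
  apply/and3P; split.
  - by apply/injectiveP => x y /(congr1 val); rewrite /= !posE => /p_inj.
  - by apply/forallP => x; rewrite posE; case/andP: (p_range x).
  - by apply/forallP => e; apply/forall_inP => u ue; rewrite !posE p_edge.
apply: (leq_trans (nu_star_le_cost cseq_pos)); rewrite /cost.
by apply: leq_sum => e _; rewrite posE; under eq_bigr do rewrite posE.
Qed.

End CSeqFromPositions.

Section PathConstruction.
Variable m : nat.
Local Notation P := (path_rel m.+1).

Definition path_edge_set (i : 'I_m) : {set 'I_m.+1} :=
  [set widen_ord (leqnSn m) i; lift ord0 i].

Lemma sum_path_edge_set (F : 'I_m.+1 -> nat) i :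
  \sum_(u in path_edge_set i) F u = F (widen_ord (leqnSn m) i) + F (lift ord0 i).
Proof.
rewrite big_setU1 ?big_set1 // in_set1.
by apply/eqP => /(congr1 (@nat_of_ord _)); rewrite lift0 /=; lia.
Qed.

Lemma path_edge_set_is_edge i : is_edge P (path_edge_set i).
Proof.
apply/existsP; exists (widen_ord (leqnSn m) i); apply/existsP; exists (lift ord0 i).
by rewrite eqxx andbT /path_rel lift0 eqxx.
Qed.

Definition path_edge (i : 'I_m) : edge_t P :=
  exist _ (path_edge_set i) (path_edge_set_is_edge i).

Lemma sum_path_edge_val i : \sum_(u in val (path_edge i)) (u : nat) = 2 * i + 1.
Proof. by rewrite sum_path_edge_set lift0 /=; lia. Qed.

Lemma path_edge_inj : injective path_edge.
Proof.
move=> i j eq_ij; apply: ord_inj.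
by have := sum_path_edge_val i; rewrite eq_ij sum_path_edge_val; lia.
Qed.

Lemma path_edge_surj (e : edge_t P) : exists i, path_edge i = e.
Proof.
case: e => s s_edge; have /existsP [u /existsP [w /andP [uw /eqP def_s]]] := s_edge.
have endpoints (a b : 'I_m.+1) (ab : a.+1 = b) :
    exists i, path_edge_set i = [set a; b].
  have a_lt : a < m by rewrite -ltnS ab ltn_ord.
  exists (Ordinal a_lt); rewrite /path_edge_set.
  by congr [set _; _]; apply: ord_inj; rewrite ?lift0.
have [i def_i] : exists i, path_edge_set i = [set u; w].
  case/orP: uw => /eqP /endpoints; first by [].
  by case=> i def_i; exists i; rewrite def_i setUC.
by exists i; apply: val_inj; rewrite /= def_i def_s.
Qed.

Lemma path_edge_bij : bijective path_edge.
Proof.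
apply: inj_card_bij path_edge_inj _; rewrite -(card_codom path_edge_inj).
apply/subset_leq_card/subsetP => e _.
by have [i <-] := path_edge_surj e; apply: codom_f.
Qed.

Lemma ell_path : ell P = 2 * m + 1.
Proof. by rewrite /ell card_sum -(bij_eq_card path_edge_bij) !card_ord; lia. Qed.

Definition vertex_pos (k : nat) : nat := if k == 0 then 1 else 2 * k.

(* The endpoint sum of {i, i+1} is 2i+1, so an edge gets 2i+3 without having
   to invert [path_edge]. *)
Definition path_pos (x : item_t P) : nat :=
  match x with
  | inl v => vertex_pos v
  | inr e => \sum_(u in val e) (u : nat) + 2
  end.

Lemma path_pos_edge i : path_pos (inr (path_edge i)) = 2 * i + 3.
Proof. by rewrite /= sum_path_edge_val -addnA. Qed.

Lemma path_pos_inj : injective path_pos.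
Proof.
case=> [v|e] [v'|e'].
- rewrite /= /vertex_pos => eq_pos; congr inl; apply: ord_inj.
  by move: eq_pos; do 2 case: eqP; lia.
- have [j <-] := path_edge_surj e'.
  by rewrite path_pos_edge /= /vertex_pos; case: eqP; lia.
- have [i <-] := path_edge_surj e.
  by rewrite path_pos_edge /= /vertex_pos; case: eqP; lia.
have [i <-] := path_edge_surj e; have [j <-] := path_edge_surj e'.
by rewrite !path_pos_edge => eq_pos; congr (inr (path_edge _)); apply: ord_inj; lia.
Qed.

Lemma path_pos_range x : 0 < path_pos x <= ell P.
Proof.
rewrite ell_path; case: x => [v|e].
  by rewrite /= /vertex_pos; have := ltn_ord v; case: eqP; lia.
by have [i <-] := path_edge_surj e; rewrite path_pos_edge; have := ltn_ord i; lia.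
Qed.

Lemma path_pos_vertex_lt_edge (e : edge_t P) u :
  u \in val e -> path_pos (inl u) < path_pos (inr e).
Proof.
have [i <-] := path_edge_surj e; rewrite path_pos_edge /= /vertex_pos !inE.
by case/orP=> /eqP ->; rewrite ?lift0 /=; [case: ifP |]; lia.
Qed.

Lemma path_edge_cost (i : nat) :
  2 * (2 * i + 3) - (vertex_pos i + vertex_pos i.+1) = if i == 0 then 3 else 4.
Proof. by case: i => [|i] //; rewrite /vertex_pos /=; lia. Qed.

Lemma path_cost :
  \sum_(e : edge_t P) (2 * path_pos (inr e) - \sum_(u in val e) path_pos (inl u))
  = 4 * m - 1.
Proof.
rewrite (reindex path_edge); last exact: onW_bij path_edge_bij.
rewrite (eq_bigr (fun i : 'I_m => if i == 0 :> nat then 3 else 4)); last first.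
  by move=> i _; rewrite path_pos_edge sum_path_edge_set -(path_edge_cost i).
case: m => [|k]; first by rewrite big_ord0.
by rewrite big_ord_recl /= sum_nat_const card_ord; lia.
Qed.

End PathConstruction.

Theorem theorem9 (n : nat) : 3 <= n -> nu_star (path_rel n) <= 4 * n - 5.
Proof.
case: n => [|m] // _.
have := nu_star_le_nat_cost (@path_pos_inj m) (@path_pos_range m)
  (@path_pos_vertex_lt_edge m).
by rewrite path_cost; lia.
Qed.
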